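(* Let a particle of mass $m>0$ and charge $q$ move under the relativistic Lorentz force in an electromagnetic field whose potential $A^\mu(t,\mathbf x)=A^\mu(t,z)$ does not depend on the transverse coordinates $x,y$. Then for every motion there is a constant $\mathbf K^{\perp}\in\mathbb R^2$ such that, parametrizing by $\xi=ct-z$, $$\hat{\mathbf u}^{\perp}(\xi)=\frac{q}{mc^2}\big[\mathbf K^{\perp}-\hat{\mathbf A}^{\perp}(\xi,\hat z(\xi))\big],$$ and, setting $\hat v(\xi,z):=\big(\tfrac{q}{mc^2}\big)^2|\mathbf K^{\perp}-\hat{\mathbf A}^{\perp}(\xi,z)|^2$, the pair $(\hat z,\hat s)$ solves the one-degree-of-freedom system $$\hat z'=\frac{1+\hat v(\xi,\hat z)}{2\hat s^2}-\frac12,\qquad mc^2\hat s'=-q\hat E^z(\xi,\hat z)+\frac{mc^2}{2\hat s}\frac{\partial\hat v}{\partial z}(\xi,\hat z).$$ The remaining unknowns are then obtained as $\hat{\mathbf x}(\xi)=\hat{\mathbf x}(\xi_0)+\int_{\xi_0}^{\xi}d\zeta\,\hat{\mathbf u}(\zeta)/\hat s(\zeta)$ (with $\hat u^z=\hat\gamma-\hat s$, $\hat\gamma=(1+\hat v+\hat s^2)/(2\hat s)$) and $c\,\hat t(\xi)=\xi+\hat z(\xi)$; inverting the strictly increasing map $\xi\mapsto\hat t(\xi)$ gives $\mathbf x(t)=\hat{\mathbf x}(\xi(t))$.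
   Context: Coordinates $\mathbf x=(x,y,z)$, $\perp$ denotes $(x,y)$-components; $\mathbf E=-\partial_t\mathbf A/c-\nabla A^0$, $\mathbf B=\nabla\wedge\mathbf A$. Equations of motion: $\dot{\mathbf p}=q\mathbf E+\frac{\mathbf p}{\sqrt{m^2c^2+\mathbf p^2}}\wedge q\mathbf B$, $\dot{\mathbf x}=c\mathbf p/\sqrt{m^2c^2+\mathbf p^2}$. $\mathbf u=\mathbf p/mc$, $\gamma=\sqrt{1+\mathbf u^2}$, $s=\gamma-u^z>0$. Since $|\dot{\mathbf x}|<c$, $\xi(t)=ct-z(t)$ is strictly increasing; $\hat f(\xi)$ denotes a dynamical variable as a function of $\xi$; for a field $f(t,z)$, $\hat f(\xi,z):=f((\xi+z)/c,z)$; prime is $d/d\xi$. *)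

From Stdlib Require Import Reals.
From Coquelicot Require Import Coquelicot.
Open Scope R_scope.

(* Fields are functions f(t,z) of time and longitudinal coordinate only:
   the potential A^mu(t,x) = A^mu(t,z) does not depend on x, y. *)
Definition partial_t (f : R -> R -> R) (t z : R) : R := Derive (fun t' => f t' z) t.
Definition partial_z (f : R -> R -> R) (t z : R) : R := Derive (fun z' => f t z') z.

Definition differentiable2 (f : R -> R -> R) : Prop :=
  forall t z, differentiable_pt_lim f t z (partial_t f t z) (partial_z f t z).

(* E = - d_t A / c - grad A^0, B = curl A, with d_x = d_y = 0 on all potentials. *)
Definition Efx (c : R) (Ax : R -> R -> R) (t z : R) : R := - partial_t Ax t z / c.
Definition Efy (c : R) (Ay : R -> R -> R) (t z : R) : R := - partial_t Ay t z / c.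
Definition Efz (c : R) (A0 Az : R -> R -> R) (t z : R) : R :=
  - partial_t Az t z / c - partial_z A0 t z.
Definition Bfx (Ay : R -> R -> R) (t z : R) : R := 0 - partial_z Ay t z.
Definition Bfy (Ax : R -> R -> R) (t z : R) : R := partial_z Ax t z - 0.
Definition Bfz (t z : R) : R := 0 - 0.

Definition hatF (c : R) (f : R -> R -> R) (xi z : R) : R := f ((xi + z) / c) z.

Definition pnorm (c m px py pz : R) : R := sqrt (m^2 * c^2 + (px^2 + py^2 + pz^2)).

Definition vhat (c m q Kx Ky : R) (Ax Ay : R -> R -> R) (xi z : R) : R :=
  (q / (m * c^2))^2 * ((Kx - hatF c Ax xi z)^2 + (Ky - hatF c Ay xi z)^2).

From Stdlib Require Import Reals Lra Ranalysis5.
From Coquelicot Require Import Coquelicot.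
Open Scope R_scope.

(* The coordinates x, y are cyclic: the transverse Lorentz force equals the total time derivative
   of -(q/c) A^perp(t, z(t)), so the canonical momentum p^perp + (q/c) A^perp is conserved, which
   is the formula for u^perp.  Since |p^z| < N := sqrt(m^2 c^2 + p^2), xi = c t - z has derivative
   c (N - p^z)/N = c s/gamma > 0, so any left inverse of xi is differentiable and
   d/dxi = (gamma / (c s)) d/dt along the motion.  The mass shell gamma^2 - (u^z)^2 = 1 + v gives
   gamma = (1 + v + s^2)/(2 s) and z' = u^z/s.  As the magnetic force does no work,
   m c ds/dt = -q (p^perp . d_z A-hat^perp)/N - q E^z (N - p^z)/N, and the first term is
   (m c^2/(2 s)) d_z v-hat dxi/dt.  The positions follow from x-hat' = u/s by the fundamental
   theorem of calculus. *)

Definition in_open (a b : Rbar) (t : R) : Prop := Rbar_lt a t /\ Rbar_lt t b.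

Lemma is_derive_continuity_pt (f : R -> R) (x l : R) :
  is_derive f x l -> continuity_pt f x.
Proof.
  intros Hf. apply continuity_pt_filterlim, (ex_derive_continuous f). now exists l.
Qed.

Section OpenInterval.

Variables a b : Rbar.

Lemma in_open_between t1 t2 t :
  in_open a b t1 -> in_open a b t2 -> t1 <= t <= t2 -> in_open a b t.
Proof.
  intros [H1 H2] [H3 H4] [H5 H6]; split.
  - destruct a; simpl in *; easy || lra.
  - destruct b; simpl in *; easy || lra.
Qed.

Lemma in_open_between_minmax t1 t2 t :
  in_open a b t1 -> in_open a b t2 -> Rmin t1 t2 <= t <= Rmax t1 t2 -> in_open a b t.
Proof.
  intros H1 H2 Ht. destruct (Rle_dec t1 t2).
  - rewrite Rmin_left, Rmax_right in Ht by lra. exact (in_open_between _ _ _ H1 H2 Ht).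
  - rewrite Rmin_right, Rmax_left in Ht by lra. exact (in_open_between _ _ _ H2 H1 Ht).
Qed.

Lemma in_open_exists_lt t : in_open a b t -> exists t1, in_open a b t1 /\ t1 < t.
Proof.
  intros [H1 H2]. destruct a as [r| |]; simpl in *; try easy.
  - exists ((r + t) / 2). repeat split; simpl; try lra.
    destruct b; simpl in *; easy || lra.
  - exists (t - 1). repeat split; simpl; try easy; try lra.
    destruct b; simpl in *; easy || lra.
Qed.

Lemma in_open_exists_gt t : in_open a b t -> exists t2, in_open a b t2 /\ t < t2.
Proof.
  intros [H1 H2]. destruct b as [r| |]; simpl in *; try easy.
  - exists ((r + t) / 2). repeat split; simpl; try lra.
    destruct a; simpl in *; easy || lra.
  - exists (t + 1). repeat split; simpl; try easy; try lra.
    destruct a; simpl in *; easy || lra.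
Qed.

Lemma in_open_nonempty : Rbar_lt a b -> exists t, in_open a b t.
Proof.
  intros H. destruct a as [r| |]; destruct b as [r'| |]; simpl in *; try easy.
  - exists ((r + r') / 2); split; simpl; lra.
  - exists (r + 1); split; simpl; easy || lra.
  - exists (r' - 1); split; simpl; easy || lra.
  - exists 0; split; simpl; easy.
Qed.

Variables f df : R -> R.
Hypothesis f_derive : forall t, in_open a b t -> is_derive f t (df t).

Lemma derive_zero_constant_on :
  (forall t, in_open a b t -> df t = 0) ->
  forall t1 t2, in_open a b t1 -> in_open a b t2 -> f t1 = f t2.
Proof.
  intros Hd t1 t2 H1 H2.
  destruct (MVT_gen f t1 t2 df) as [t [Ht Hmvt]].
  - intros t Ht. apply f_derive, (in_open_between_minmax t1 t2); auto; lra.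
  - intros t Ht. apply (is_derive_continuity_pt _ _ (df t)), f_derive.
    exact (in_open_between_minmax t1 t2 t H1 H2 Ht).
  - rewrite Hd in Hmvt by exact (in_open_between_minmax t1 t2 t H1 H2 Ht). lra.
Qed.

Lemma intermediate_value_on t1 t2 v :
  in_open a b t1 -> in_open a b t2 -> t1 <= t2 -> f t1 <= v <= f t2 ->
  exists t, t1 <= t <= t2 /\ f t = v.
Proof.
  intros H1 H2 Hle Hv.
  destruct (Req_dec (f t1) v) as [E|E]. { exists t1; split; [lra|easy]. }
  destruct (Req_dec (f t2) v) as [E'|E']. { exists t2; split; [lra|easy]. }
  destruct (IVT_interv (fun t => f t - v) t1 t2) as [t [Ht Hft]]; try lra.
  - intros t Ht. apply continuity_pt_minus; [|apply continuity_pt_const; now intros ? ?].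
    apply (is_derive_continuity_pt _ _ (df t)), f_derive.
    apply (in_open_between t1 t2); auto; lra.
  - destruct (Req_dec t1 t2); [subst; lra | lra].
  - exists t. split; lra.
Qed.

Hypothesis df_pos : forall t, in_open a b t -> 0 < df t.

Lemma increasing_on t1 t2 :
  in_open a b t1 -> in_open a b t2 -> t1 < t2 -> f t1 < f t2.
Proof.
  intros [H1 _] [_ H2] H12.
  apply (incr_function f a b df); auto; intros u Hu1 Hu2.
  - apply f_derive; split; auto.
  - apply df_pos; split; auto.
Qed.

Lemma image_between t1 t2 v :
  in_open a b t1 -> in_open a b t2 -> Rmin (f t1) (f t2) <= v <= Rmax (f t1) (f t2) ->
  exists t, in_open a b t /\ f t = v.
Proof.
  intros H1 H2 Hv.
  assert (Hgen : forall u1 u2, in_open a b u1 -> in_open a b u2 -> u1 <= u2 ->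
            f u1 <= v <= f u2 -> exists t, in_open a b t /\ f t = v).
  { intros u1 u2 U1 U2 Hu Hfu.
    destruct (intermediate_value_on u1 u2 v U1 U2 Hu Hfu) as [t [Ht Hft]].
    exists t. split; [exact (in_open_between u1 u2 t U1 U2 Ht) | exact Hft]. }
  destruct (Rle_dec t1 t2) as [Hle|Hle].
  - assert (f t1 <= f t2).
    { destruct (Req_dec t1 t2) as [->|]; [lra|]. left; apply increasing_on; auto; lra. }
    rewrite Rmin_left, Rmax_right in Hv by lra. exact (Hgen t1 t2 H1 H2 Hle Hv).
  - assert (f t2 < f t1) by (apply increasing_on; auto; lra).
    rewrite Rmin_right, Rmax_left in Hv by lra. apply (Hgen t2 t1); auto; lra.
Qed.

Variable tau : R -> R.
Hypothesis tau_f : forall t, in_open a b t -> tau (f t) = t.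

Lemma left_inverse_derive t0 : in_open a b t0 -> is_derive tau (f t0) (1 / df t0).
Proof.
  intros H0.
  destruct (in_open_exists_lt t0 H0) as [t1 [H1 Ht1]].
  destruct (in_open_exists_gt t0 H0) as [t2 [H2 Ht2]].
  assert (Hin : forall t, t1 <= t <= t2 -> in_open a b t).
  { intros t Ht; exact (in_open_between t1 t2 t H1 H2 Ht). }
  assert (E1 : tau (f t1) = t1) by auto.
  assert (E2 : tau (f t2) = t2) by auto.
  assert (E0 : tau (f t0) = t0) by auto.
  assert (Hf01 : f t1 < f t0) by (apply increasing_on; auto).
  assert (Hf02 : f t0 < f t2) by (apply increasing_on; auto).
  assert (Hcont : continuity_pt tau (f t0)).
  { apply (continuity_pt_recip_prelim f tau t1 t2); try lra.
    - intros u v Hu Huv Hv; apply increasing_on; auto; apply Hin; lra.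
    - intros u Hu; unfold comp, id; apply tau_f, Hin; lra.
    - intros u Hu. apply (is_derive_continuity_pt _ _ (df u)), f_derive, Hin; lra. }
  assert (Hincr : tau (f t1) <= tau (f t0) <= tau (f t2)) by (rewrite E1, E2, E0; lra).
  unshelve refine (let Prf : forall u, tau (f t1) <= u <= tau (f t2) -> derivable_pt f u :=
                     fun u Hu => exist _ (df u) _ in _).
  { apply is_derive_Reals, f_derive, Hin. rewrite E1, E2 in Hu. exact Hu. }
  pose proof (derivable_pt_lim_recip_interv f tau (f t1) (f t2) (f t0) Prf Hcont
                ltac:(lra) ltac:(lra) Hincr) as Hlim.
  apply is_derive_Reals. simpl in Hlim. rewrite E0 in Hlim.
  apply Hlim; [|specialize (df_pos t0 H0); lra].
  intros v Hv. destruct (intermediate_value_on t1 t2 v H1 H2 ltac:(lra) Hv) as [t [Ht <-]].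
  unfold comp, id. rewrite tau_f; auto.
Qed.

Lemma is_derive_comp_left_inverse (X : R -> R) (dX t : R) :
  in_open a b t -> is_derive X t dX ->
  is_derive (fun v => X (tau v)) (f t) (dX / df t).
Proof.
  intros Ht HX. replace (dX / df t) with (scal (1 / df t) dX)
    by (unfold scal; simpl; unfold mult; simpl; field; specialize (df_pos t Ht); lra).
  apply (is_derive_comp X tau); [rewrite tau_f; auto | apply left_inverse_derive; auto].
Qed.

Lemma is_RInt_comp_left_inverse (X g : R -> R) :
  (forall t, in_open a b t -> is_derive X t (g t * df t)) ->
  (forall t, in_open a b t -> ex_derive g t) ->
  forall t1 t2, in_open a b t1 -> in_open a b t2 ->
  is_RInt (fun v => g (tau v)) (f t1) (f t2) (X t2 - X t1).
Proof.
  intros HX Hg t1 t2 H1 H2.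
  replace (X t2 - X t1) with (minus (X (tau (f t2))) (X (tau (f t1))))
    by now rewrite !tau_f.
  apply (is_RInt_derive (fun v => X (tau v))); intros v Hv;
    destruct (image_between t1 t2 v H1 H2 Hv) as [t [Ht <-]].
  - replace (g (tau (f t))) with (g t * df t / df t)
      by (rewrite tau_f by auto; field; specialize (df_pos t Ht); lra).
    exact (is_derive_comp_left_inverse X _ t Ht (HX t Ht)).
  - apply (ex_derive_continuous (fun v => g (tau v))).
    apply (ex_derive_comp g tau); [rewrite tau_f; auto | eexists; apply left_inverse_derive; auto].
Qed.

End OpenInterval.

Lemma pnorm_sq c m px py pz :
  pnorm c m px py pz ^ 2 = m ^ 2 * c ^ 2 + (px ^ 2 + py ^ 2 + pz ^ 2).
Proof. unfold pnorm. rewrite <- Rsqr_pow2. apply Rsqr_sqrt. nra. Qed.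

Lemma Rabs_lt_pnorm c m px py pz : 0 < c -> 0 < m -> Rabs pz < pnorm c m px py pz.
Proof.
  intros Hc Hm. unfold pnorm. rewrite <- sqrt_Rsqr_abs. apply sqrt_lt_1_alt.
  unfold Rsqr. assert (0 < m * c) by nra. split; nra.
Qed.

Lemma pnorm_eq_gamma c m px py pz : 0 < c -> 0 < m ->
  pnorm c m px py pz =
  m * c * sqrt (1 + ((px / (m * c)) ^ 2 + (py / (m * c)) ^ 2 + (pz / (m * c)) ^ 2)).
Proof.
  intros Hc Hm. unfold pnorm.
  replace (m ^ 2 * c ^ 2 + (px ^ 2 + py ^ 2 + pz ^ 2))
    with ((m * c) ^ 2 * (1 + ((px / (m * c)) ^ 2 + (py / (m * c)) ^ 2 + (pz / (m * c)) ^ 2)))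
    by (field; nra).
  rewrite sqrt_mult_alt, sqrt_pow2 by (apply pow2_ge_0 || nra). reflexivity.
Qed.

Lemma is_derive_along (A : R -> R -> R) (z : R -> R) (t dz : R) :
  differentiable2 A -> is_derive z t dz ->
  is_derive (fun s => A s (z s)) t (partial_t A t (z t) + partial_z A t (z t) * dz).
Proof.
  intros HA Hz. apply is_derive_Reals. rewrite <- (Rmult_1_r (partial_t A t (z t))).
  apply (derivable_pt_lim_comp_2d A (fun s => s) z t).
  - apply HA.
  - apply derivable_pt_lim_id.
  - now apply is_derive_Reals.
Qed.

Lemma hatF_light_front c (A : R -> R -> R) t zt :
  c <> 0 -> hatF c A (c * t - zt) zt = A t zt.
Proof. intros Hc. unfold hatF. f_equal. field. exact Hc. Qed.

Lemma is_derive_hatF_z c (A : R -> R -> R) v zz : c <> 0 -> differentiable2 A ->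
  is_derive (hatF c A v) zz
    (partial_t A ((v + zz) / c) zz / c + partial_z A ((v + zz) / c) zz).
Proof.
  intros Hc HA. apply is_derive_Reals. unfold hatF.
  rewrite <- (Rmult_1_r (partial_z A _ zz)), Rdiv_def.
  apply (derivable_pt_lim_comp_2d A (fun zz => (v + zz) / c) (fun zz => zz) zz).
  - apply HA.
  - apply is_derive_Reals. auto_derive; [easy | field; exact Hc].
  - apply derivable_pt_lim_id.
Qed.

Lemma canonical_momentum_conserved (a b : Rbar) (c q : R) (A : R -> R -> R) (z dz p : R -> R) :
  c <> 0 -> q <> 0 -> Rbar_lt a b -> differentiable2 A ->
  (forall t, in_open a b t -> is_derive z t (dz t)) ->
  (forall t, in_open a b t ->
     is_derive p t (- q / c * (partial_t A t (z t) + partial_z A t (z t) * dz t))) ->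
  exists K, forall t, in_open a b t -> p t = q / c * (K - A t (z t)).
Proof.
  intros Hc Hq Hab HA Hz Hp.
  set (D s := partial_t A s (z s) + partial_z A s (z s) * dz s).
  destruct (in_open_nonempty a b Hab) as [t0 Ht0].
  exists (c / q * p t0 + A t0 (z t0)). intros t Ht.
  assert (E : p t + q / c * A t (z t) = p t0 + q / c * A t0 (z t0)).
  { apply (derive_zero_constant_on a b (fun s => p s + q / c * A s (z s))
             (fun s => - q / c * D s + q / c * D s)); auto.
    - intros s Hs. apply (is_derive_plus p); [now apply Hp|].
      apply (is_derive_scal (fun s => A s (z s))), is_derive_along; auto.
    - intros s _. lra. }
  transitivity (p t0 + q / c * A t0 (z t0) - q / c * A t (z t)); [lra | field; auto].
Qed.

Section LightFrontMotion.

Variables (c m q : R) (A0 Ax Ay Az : R -> R -> R) (a b : Rbar) (x y z px py pz : R -> R).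
Hypotheses (c_gt0 : 0 < c) (m_gt0 : 0 < m).
Hypotheses (Ax_diff : differentiable2 Ax) (Ay_diff : differentiable2 Ay).

Let N t := pnorm c m (px t) (py t) (pz t).
Let gam t := sqrt (1 + ((px t / (m * c)) ^ 2 + (py t / (m * c)) ^ 2 + (pz t / (m * c)) ^ 2)).
Let s t := gam t - pz t / (m * c).
Let xi t := c * t - z t.
Let xi' t := c - c * pz t / N t.
(* [dzhat A t] is the z-derivative of [hatF c A] at (xi t, z t), see [is_derive_hatF_z]. *)
Let dzhat (A : R -> R -> R) t := partial_t A t (z t) / c + partial_z A t (z t).

Hypothesis motion : forall t, in_open a b t ->
  is_derive px t (q * Efx c Ax t (z t)
                  + (py t / N t * (q * Bfz t (z t)) - pz t / N t * (q * Bfy Ax t (z t)))) /\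
  is_derive py t (q * Efy c Ay t (z t)
                  + (pz t / N t * (q * Bfx Ay t (z t)) - px t / N t * (q * Bfz t (z t)))) /\
  is_derive pz t (q * Efz c A0 Az t (z t)
                  + (px t / N t * (q * Bfy Ax t (z t)) - py t / N t * (q * Bfx Ay t (z t)))) /\
  is_derive x t (c * px t / N t) /\
  is_derive y t (c * py t / N t) /\
  is_derive z t (c * pz t / N t).

Lemma px_derive t : in_open a b t ->
  is_derive px t (q * Efx c Ax t (z t)
                  + (py t / N t * (q * Bfz t (z t)) - pz t / N t * (q * Bfy Ax t (z t)))).
Proof. intros Ht. apply (motion t Ht). Qed.

Lemma py_derive t : in_open a b t ->
  is_derive py t (q * Efy c Ay t (z t)
                  + (pz t / N t * (q * Bfx Ay t (z t)) - px t / N t * (q * Bfz t (z t)))).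
Proof. intros Ht. apply (motion t Ht). Qed.

Lemma pz_derive t : in_open a b t ->
  is_derive pz t (q * Efz c A0 Az t (z t)
                  + (px t / N t * (q * Bfy Ax t (z t)) - py t / N t * (q * Bfx Ay t (z t)))).
Proof. intros Ht. apply (motion t Ht). Qed.

Lemma z_derive t : in_open a b t -> is_derive z t (c * pz t / N t).
Proof. intros Ht. apply (motion t Ht). Qed.

Lemma N_gt_pz t : pz t < N t /\ 0 < N t.
Proof.
  pose proof (Rabs_lt_pnorm c m (px t) (py t) (pz t) c_gt0 m_gt0).
  pose proof (Rle_abs (pz t)). pose proof (Rabs_pos (pz t)). unfold N. lra.
Qed.

Lemma p_perp_sq t : px t ^ 2 + py t ^ 2 = N t ^ 2 - m ^ 2 * c ^ 2 - pz t ^ 2.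
Proof. unfold N. rewrite pnorm_sq. ring. Qed.

Lemma gam_eq t : gam t = N t / (m * c).
Proof. unfold N, gam. rewrite pnorm_eq_gamma by auto. field. lra. Qed.

Lemma s_eq t : s t = (N t - pz t) / (m * c).
Proof. unfold s. rewrite gam_eq. field. lra. Qed.

Lemma s_pos t : 0 < s t.
Proof. rewrite s_eq. destruct (N_gt_pz t). apply Rdiv_lt_0_compat; nra. Qed.

Lemma xi_derive t : in_open a b t -> is_derive xi t (xi' t).
Proof.
  intros Ht. apply (is_derive_minus (fun t => c * t) z t c); [|now apply z_derive].
  apply is_derive_Reals. auto_derive; [easy | ring].
Qed.

Lemma xi'_eq t : xi' t = c * m * c * s t / N t.
Proof. rewrite s_eq. unfold xi'. destruct (N_gt_pz t). field. lra. Qed.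

Lemma xi'_pos t : 0 < xi' t.
Proof.
  rewrite xi'_eq. destruct (N_gt_pz t). pose proof (s_pos t).
  apply Rdiv_lt_0_compat; auto. repeat apply Rmult_lt_0_compat; auto.
Qed.

Lemma s_derive t : in_open a b t ->
  is_derive s t (- q / (m * c) * ((px t * dzhat Ax t + py t * dzhat Ay t) / N t
                                  + Efz c A0 Az t (z t) * (N t - pz t) / N t)).
Proof.
  intros Ht. destruct (N_gt_pz t) as [HN1 HN2].
  apply (is_derive_ext (fun t => (sqrt (m ^ 2 * c ^ 2 + (px t ^ 2 + py t ^ 2 + pz t ^ 2)) - pz t)
                                 / (m * c))).
  { intros u. now rewrite s_eq. }
  auto_derive.
  - repeat split; try (eexists; eauto using px_derive, py_derive, pz_derive; fail).
    assert (0 < m * c) by nra. nra.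
  - rewrite (is_derive_unique (fun u : R => px u) t _ (px_derive t Ht)),
      (is_derive_unique (fun u : R => py u) t _ (py_derive t Ht)),
      (is_derive_unique (fun u : R => pz u) t _ (pz_derive t Ht)).
    replace (sqrt (m * (m * 1) * (c * (c * 1))
                   + (px t * (px t * 1) + py t * (py t * 1) + pz t * (pz t * 1))))
      with (N t) by (unfold N, pnorm; f_equal; ring).
    unfold dzhat, Efx, Efy, Efz, Bfx, Bfy, Bfz. field. lra.
Qed.

Lemma transverse_force_x t : in_open a b t ->
  is_derive px t (- q / c * (partial_t Ax t (z t) + partial_z Ax t (z t) * (c * pz t / N t))).
Proof.
  intros Ht. destruct (N_gt_pz t).
  replace (- q / c * _) with (q * Efx c Ax t (z t)
    + (py t / N t * (q * Bfz t (z t)) - pz t / N t * (q * Bfy Ax t (z t)))).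
  - now apply px_derive.
  - unfold Efx, Bfy, Bfz. field. lra.
Qed.

Lemma transverse_force_y t : in_open a b t ->
  is_derive py t (- q / c * (partial_t Ay t (z t) + partial_z Ay t (z t) * (c * pz t / N t))).
Proof.
  intros Ht. destruct (N_gt_pz t).
  replace (- q / c * _) with (q * Efy c Ay t (z t)
    + (pz t / N t * (q * Bfx Ay t (z t)) - px t / N t * (q * Bfz t (z t)))).
  - now apply py_derive.
  - unfold Efy, Bfx, Bfz. field. lra.
Qed.

Variables Kx Ky : R.
Hypothesis px_canonical : forall t, in_open a b t -> px t = q / c * (Kx - Ax t (z t)).
Hypothesis py_canonical : forall t, in_open a b t -> py t = q / c * (Ky - Ay t (z t)).

Lemma vhat_light_front t : in_open a b t ->
  vhat c m q Kx Ky Ax Ay (xi t) (z t) = (px t ^ 2 + py t ^ 2) / (m * c) ^ 2.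
Proof.
  intros Ht. unfold vhat, xi. rewrite !hatF_light_front by lra.
  rewrite (px_canonical t Ht), (py_canonical t Ht). field. lra.
Qed.

Lemma vhat_z_derive t : in_open a b t ->
  is_derive (vhat c m q Kx Ky Ax Ay (xi t)) (z t)
    (- 2 * q / (m ^ 2 * c ^ 3) * (px t * dzhat Ax t + py t * dzhat Ay t)).
Proof.
  intros Ht.
  assert (Hxi : (xi t + z t) / c = t) by (unfold xi; field; lra).
  pose proof (is_derive_hatF_z c Ax (xi t) (z t) ltac:(lra) Ax_diff) as DAx.
  pose proof (is_derive_hatF_z c Ay (xi t) (z t) ltac:(lra) Ay_diff) as DAy.
  rewrite Hxi in DAx, DAy.
  unfold vhat. auto_derive.
  - repeat split; eexists; eauto.
  - rewrite (is_derive_unique (fun x : R => hatF c Ax (xi t) x) _ _ DAx),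
      (is_derive_unique (fun x : R => hatF c Ay (xi t) x) _ _ DAy).
    unfold xi. rewrite !hatF_light_front by lra.
    rewrite (px_canonical t Ht), (py_canonical t Ht). unfold dzhat. field. lra.
Qed.

Lemma xi_increasing t1 t2 :
  in_open a b t1 -> in_open a b t2 -> t1 < t2 -> xi t1 < xi t2.
Proof. apply (increasing_on a b xi xi'); [exact xi_derive | intros; apply xi'_pos]. Qed.

Variable tau : R -> R.
Hypothesis tau_xi : forall t, in_open a b t -> tau (xi t) = t.

Lemma u_perp_light_front t : in_open a b t ->
  px (tau (xi t)) / (m * c) = q / (m * c ^ 2) * (Kx - hatF c Ax (xi t) (z (tau (xi t)))) /\
  py (tau (xi t)) / (m * c) = q / (m * c ^ 2) * (Ky - hatF c Ay (xi t) (z (tau (xi t)))).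
Proof.
  intros Ht. rewrite tau_xi by auto. unfold xi. rewrite !hatF_light_front by lra.
  rewrite (px_canonical t Ht), (py_canonical t Ht). split; field; lra.
Qed.

Lemma light_front_identities t : in_open a b t ->
  0 < s (tau (xi t)) /\
  gam (tau (xi t)) = (1 + vhat c m q Kx Ky Ax Ay (xi t) (z (tau (xi t))) + s (tau (xi t)) ^ 2)
                     / (2 * s (tau (xi t))) /\
  pz (tau (xi t)) / (m * c) = gam (tau (xi t)) - s (tau (xi t)) /\
  c * tau (xi t) = xi t + z (tau (xi t)).
Proof.
  intros Ht. rewrite tau_xi by auto. repeat split.
  - apply s_pos.
  - destruct (N_gt_pz t).
    rewrite vhat_light_front, p_perp_sq, gam_eq, s_eq by auto. field. lra.
  - unfold s. ring.
  - unfold xi. ring.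
Qed.

Lemma z_light_front_derive t : in_open a b t ->
  is_derive (fun v => z (tau v)) (xi t)
    ((1 + vhat c m q Kx Ky Ax Ay (xi t) (z (tau (xi t)))) / (2 * s (tau (xi t)) ^ 2) - 1 / 2).
Proof.
  intros Ht. destruct (N_gt_pz t).
  replace (_ - 1 / 2) with (c * pz t / N t / xi' t).
  - apply (is_derive_comp_left_inverse a b xi xi'); auto using xi_derive, xi'_pos, z_derive.
  - rewrite tau_xi, vhat_light_front, p_perp_sq, s_eq by auto. unfold xi'. field. repeat split; nra.
Qed.

Lemma s_light_front_derive t : in_open a b t ->
  ex_derive (fun v => s (tau v)) (xi t) /\
  m * c ^ 2 * Derive (fun v => s (tau v)) (xi t) =
    - q * hatF c (Efz c A0 Az) (xi t) (z (tau (xi t)))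
    + m * c ^ 2 / (2 * s (tau (xi t)))
      * Derive (vhat c m q Kx Ky Ax Ay (xi t)) (z (tau (xi t))).
Proof.
  intros Ht.
  pose proof (is_derive_comp_left_inverse a b xi xi' xi_derive (fun t _ => xi'_pos t)
                tau tau_xi s _ t Ht (s_derive t Ht)) as Hs.
  split; [eexists; exact Hs|].
  rewrite (is_derive_unique (fun v : R => s (tau v)) _ _ Hs), tau_xi by auto.
  rewrite (is_derive_unique _ _ _ (vhat_z_derive t Ht)).
  unfold xi at 1. rewrite hatF_light_front by lra.
  destruct (N_gt_pz t). rewrite s_eq. unfold xi'. field. nra.
Qed.

Lemma is_RInt_light_front (X p : R -> R) :
  (forall t, in_open a b t -> is_derive X t (c * p t / N t)) ->
  (forall t, in_open a b t -> ex_derive p t) ->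
  forall t1 t2, in_open a b t1 -> in_open a b t2 ->
  is_RInt (fun v => p (tau v) / (m * c) / s (tau v)) (xi t1) (xi t2) (X t2 - X t1).
Proof.
  intros HX Hp.
  apply (is_RInt_comp_left_inverse a b xi xi' xi_derive (fun t _ => xi'_pos t) tau tau_xi X
           (fun t => p t / (m * c) / s t)).
  - intros t Ht. replace (p t / (m * c) / s t * xi' t) with (c * p t / N t); auto.
    rewrite xi'_eq. pose proof (s_pos t). destruct (N_gt_pz t). field. lra.
  - intros t Ht.
    apply ex_derive_div; [apply ex_derive_div; auto; [apply ex_derive_const | nra] | |].
    + eexists; exact (s_derive t Ht).
    + pose proof (s_pos t); lra.
Qed.

Lemma positions_light_front t1 t2 : in_open a b t1 -> in_open a b t2 ->
  is_RInt (fun v => px (tau v) / (m * c) / s (tau v)) (xi t1) (xi t2) (x t2 - x t1) /\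
  is_RInt (fun v => py (tau v) / (m * c) / s (tau v)) (xi t1) (xi t2) (y t2 - y t1) /\
  is_RInt (fun v => pz (tau v) / (m * c) / s (tau v)) (xi t1) (xi t2) (z t2 - z t1).
Proof.
  intros H1 H2.
  repeat split; apply is_RInt_light_front; auto; intros t Ht;
    solve [ apply (motion t Ht) | eexists; now apply px_derive
          | eexists; now apply py_derive | eexists; now apply pz_derive ].
Qed.

End LightFrontMotion.

Theorem proposition4
  (c m q : R) (A0 Ax Ay Az : R -> R -> R)
  (a b : Rbar) (x y z px py pz : R -> R) :
  0 < c -> 0 < m -> q <> 0 ->
  differentiable2 A0 -> differentiable2 Ax -> differentiable2 Ay -> differentiable2 Az ->
  (* the motion, on the open time interval I = ]a, b[ *)
  Rbar_lt a b ->
  (forall t : R, Rbar_lt a t -> Rbar_lt t b ->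
     let N := pnorm c m (px t) (py t) (pz t) in
     let wx := px t / N in let wy := py t / N in let wz := pz t / N in
     is_derive px t (q * Efx c Ax t (z t)
                     + (wy * (q * Bfz t (z t)) - wz * (q * Bfy Ax t (z t)))) /\
     is_derive py t (q * Efy c Ay t (z t)
                     + (wz * (q * Bfx Ay t (z t)) - wx * (q * Bfz t (z t)))) /\
     is_derive pz t (q * Efz c A0 Az t (z t)
                     + (wx * (q * Bfy Ax t (z t)) - wy * (q * Bfx Ay t (z t)))) /\
     is_derive x t (c * px t / N) /\
     is_derive y t (c * py t / N) /\
     is_derive z t (c * pz t / N)) ->
  (* xi(t) = c t - z(t) is strictly increasing on I *)
  (forall t1 t2 : R, Rbar_lt a t1 -> Rbar_lt t1 b -> Rbar_lt a t2 -> Rbar_lt t2 b ->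
     t1 < t2 -> c * t1 - z t1 < c * t2 - z t2) /\
  exists Kx Ky : R,
  (* for the inverse map xi |-> t-hat(xi) (any left inverse of xi on I) *)
  forall tau : R -> R,
  (forall t : R, Rbar_lt a t -> Rbar_lt t b -> tau (c * t - z t) = t) ->
  let ux t := px t / (m * c) in
  let uy t := py t / (m * c) in
  let uz t := pz t / (m * c) in
  let gam t := sqrt (1 + (ux t ^ 2 + uy t ^ 2 + uz t ^ 2)) in
  let s t := gam t - uz t in
  let zh xi := z (tau xi) in
  let sh xi := s (tau xi) in
  let vh xi zz := vhat c m q Kx Ky Ax Ay xi zz in
  let J xi := exists t : R, Rbar_lt a t /\ Rbar_lt t b /\ xi = c * t - z t in
  (forall xi, J xi ->
     ux (tau xi) = q / (m * c^2) * (Kx - hatF c Ax xi (zh xi)) /\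
     uy (tau xi) = q / (m * c^2) * (Ky - hatF c Ay xi (zh xi))) /\
  (forall xi, J xi ->
     is_derive zh xi ((1 + vh xi (zh xi)) / (2 * sh xi ^ 2) - 1 / 2)) /\
  (forall xi, J xi ->
     ex_derive sh xi /\
     m * c^2 * Derive sh xi =
       - q * hatF c (Efz c A0 Az) xi (zh xi)
       + m * c^2 / (2 * sh xi) * Derive (fun zz => vh xi zz) (zh xi)) /\
  (forall xi, J xi ->
     0 < sh xi /\
     gam (tau xi) = (1 + vh xi (zh xi) + sh xi ^ 2) / (2 * sh xi) /\
     uz (tau xi) = gam (tau xi) - sh xi /\
     c * tau xi = xi + zh xi) /\
  (forall xi0 xi, J xi0 -> J xi ->
     is_RInt (fun zeta => ux (tau zeta) / sh zeta) xi0 xi (x (tau xi) - x (tau xi0)) /\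
     is_RInt (fun zeta => uy (tau zeta) / sh zeta) xi0 xi (y (tau xi) - y (tau xi0)) /\
     is_RInt (fun zeta => uz (tau zeta) / sh zeta) xi0 xi (z (tau xi) - z (tau xi0))).
Proof.
  (* Only the value of E^z enters, so A^0 and A^z need no regularity. *)
  intros Hc Hm Hq _ HAx HAy _ Hab Hmot.
  pose proof (fun t (Ht : in_open a b t) => Hmot t (proj1 Ht) (proj2 Ht)) as Hmotion.
  cbv zeta in Hmotion. clear Hmot.
  split.
  { intros t1 t2 H1 H2 H3 H4. eapply xi_increasing; eauto; split; auto. }
  pose (dz t := c * pz t / pnorm c m (px t) (py t) (pz t)).
  destruct (canonical_momentum_conserved a b c q Ax z dz px) as [Kx HKx];
    try lra; eauto using z_derive, transverse_force_x.
  destruct (canonical_momentum_conserved a b c q Ay z dz py) as [Ky HKy];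
    try lra; eauto using z_derive, transverse_force_y.
  exists Kx, Ky. intros tau Htau0.
  assert (Htau : forall t, in_open a b t -> tau (c * t - z t) = t)
    by (intros t [H1 H2]; auto).
  intros ux uy uz gam s zh sh vh J.
  assert (HJ : forall v, J v -> exists t, in_open a b t /\ v = c * t - z t)
    by (intros v (t & H1 & H2 & Hv); exists t; repeat split; auto).
  split; [|split; [|split; [|split]]].
  - intros v Hv. destruct (HJ v Hv) as [t [Ht ->]]. eapply u_perp_light_front; eauto.
  - intros v Hv. destruct (HJ v Hv) as [t [Ht ->]]. eapply z_light_front_derive; eauto.
  - intros v Hv. destruct (HJ v Hv) as [t [Ht ->]]. eapply s_light_front_derive; eauto.
  - intros v Hv. destruct (HJ v Hv) as [t [Ht ->]]. eapply light_front_identities; eauto.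
  - intros v0 v Hv0 Hv. destruct (HJ v0 Hv0) as [t0 [Ht0 ->]], (HJ v Hv) as [t [Ht ->]].
    rewrite !Htau by auto. eapply positions_light_front; eauto.
Qed.
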